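(* Let $\mathcal{M}=(V,\{A_i\}_{i\in V},P)$ be a finite Markov decision process with $V=\{1,\dots,n\}$, nonempty finite action sets $A_i$ and transition probabilities $P(i,a,j)$. Fix $\lambda\ge 0$ and $\zeta>0$. For $S\subseteq V$ define the polytope $$\mathcal{P}(\lambda,S)=\Big\{h\in\mathbb{R}^n:\ h(i)-\sum_{j=1}^n P(i,a,j)h(j)\le b(S)_{(i,a)}\ \ \forall i\in V,\ a\in A_i,\ \ \|h\|_\infty\le\zeta\Big\},$$ where $b(S)_{(i,a)}=1-\lambda$ if $i\in S$ and $b(S)_{(i,a)}=1$ if $i\notin S$. Let $r_\lambda(S)$ be the $n$-dimensional Lebesgue volume of $\mathcal{P}(\lambda,S)$. Then $r_\lambda:2^V\to\mathbb{R}$ is nonincreasing and supermodular, i.e., $r_\lambda(T)\le r_\lambda(S)$ whenever $S\subseteq T\subseteq V$, and $r_\lambda(S\cup\{v\})-r_\lambda(S)\le r_\lambda(T\cup\{v\})-r_\lambda(T)$ for all $S\subseteq T\subseteq V$ and $v\in V\setminus T$.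
   Context: A set function $f:2^W\to\mathbb{R}$ is submodular if $f(S\cup\{v\})-f(S)\ge f(T\cup\{v\})-f(T)$ for all $S\subseteq T\subseteq W$ and $v\notin T$; it is supermodular if $-f$ is submodular. *)

From HB Require Import structures.
From mathcomp Require Import all_boot all_order all_algebra.
From mathcomp Require Import all_classical all_reals all_analysis.
Set Implicit Arguments. Unset Strict Implicit. Unset Printing Implicit Defensive.
Import Order.TTheory GRing.Theory Num.Theory.
Local Open Scope ring_scope.
Local Open Scope classical_set_scope.

(* Vectors of R^n are functions 'I_n -> R.  [vcons x v] is (x, v_0, ..., v_(n-1)). *)
Definition vcons (R : Type) (n : nat) (x : R) (v : 'I_n -> R) : 'I_n.+1 -> R :=
  fun i => if unlift ord0 i is Some j then v j else x.

Fixpoint iint (R : realType) (n : nat) : (('I_n -> R) -> \bar R) -> \bar R :=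
  match n return (('I_n -> R) -> \bar R) -> \bar R with
  | 0 => fun f => f (fun _ => 0)
  | n'.+1 => fun f =>
      (\int[@lebesgue_measure R]_(x in setT) @iint R n' (fun v => f (vcons (x : R) v)))%E
  end.

(* n-dimensional Lebesgue volume of a (Borel) set A of R^n, computed by
   Tonelli as the iterated integral of its indicator function. *)
Definition lvolume (R : realType) (n : nat) (A : set ('I_n -> R)) : \bar R :=
  iint (fun h => (\1_A h)%:E).

Definition bS (R : realType) (n : nat) (lam : R) (S : {set 'I_n}) (i : 'I_n) : R :=
  if i \in S then 1 - lam else 1.

Definition mdp_polytope (R : realType) (n : nat) (A : 'I_n -> finType)
  (P : forall i : 'I_n, A i -> 'I_n -> R) (lam zeta : R) (S : {set 'I_n})
  : set ('I_n -> R) :=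
  [set h | (forall (i : 'I_n) (a : A i),
              h i - \sum_(j < n) P i a j * h j <= bS lam S i)
           /\ (forall i : 'I_n, `|h i| <= zeta)].

(* r_lambda(S) := Lebesgue volume of P(lambda, S) (a finite number, since the
   polytope lies in the cube [-zeta, zeta]^n). *)
Definition r_lam (R : realType) (n : nat) (A : 'I_n -> finType)
  (P : forall i : 'I_n, A i -> 'I_n -> R) (lam zeta : R) (S : {set 'I_n}) : R :=
  fine (lvolume (mdp_polytope P lam zeta S)).

From HB Require Import structures.
From mathcomp Require Import all_boot all_order all_algebra.
From mathcomp Require Import all_classical all_reals all_analysis.
From mathcomp Require Import measurable_realfun.
Import Order.TTheory GRing.Theory Num.Theory.
Local Open Scope ring_scope.
Local Open Scope classical_set_scope.

(* Putting a state v into S replaces the constraints of v by their tightened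
   versions, i.e. intersects P(lam, S) with the fixed set C_v of points
   satisfying the tight constraints of v.  Hence r(S) - r(S + v) is the volume
   of P(lam, S) \ C_v, which can only decrease when S grows, because
   P(lam, S) shrinks: this is supermodularity.  The volume itself, defined as
   an iterated integral, is by Tonelli the measure of the polytope for a
   sigma-finite product of Lebesgue measures, built by induction on n. *)

Section sigma_finite_product.
Context {d1 d2 : measure_display} {T1 : measurableType d1}
  {T2 : measurableType d2} {R : realType}.
Variables (m1 : {sigma_finite_measure set T1 -> \bar R})
  (m2 : {sigma_finite_measure set T2 -> \bar R}).

Lemma product_measure1_sigma_finite : sigma_finite setT (m1 \x m2)%E.
Proof.
have /sigma_finiteP[F [TF ndF Ffin]] := sigma_finiteT m1.
have /sigma_finiteP[G [TG ndG Gfin]] := sigma_finiteT m2.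
exists (fun k => F k `*` G k); last first.
  move=> k; have [mF F_lty] := Ffin k; have [mG G_lty] := Gfin k.
  split; first exact: measurableX.
  by rewrite product_measure1E// lte_mul_pinfty// ge0_fin_numE.
apply/seteqP; split=> [[x y] _|//].
have /[!TF] -[i _ Fix] : [set: T1] x by [].
have /[!TG] -[j _ Gjy] : [set: T2] y by [].
exists (maxn i j) => //; split.
- by move: x Fix; apply/subsetPset/ndF/leq_maxl.
- by move: y Gjy; apply/subsetPset/ndG/leq_maxr.
Qed.

(* The library already keys a (finite-measure) structure on [product_measure1],
   so the sigma-finite one has to live on an alias. *)
Definition sigma_finite_product : set (T1 * T2) -> \bar R := (m1 \x m2)%E.

HB.instance Definition _ := Measure.on sigma_finite_product.
HB.instance Definition _ := Measure_isSigmaFinite.Build _ _ _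
  sigma_finite_product product_measure1_sigma_finite.
End sigma_finite_product.

Section measurable_sets.
Context {d : measure_display} {T : measurableType d} {R : realType}.

Lemma measurable_set_ler (g : T -> R) (c : R) :
  measurable_fun setT g -> measurable [set t | g t <= c].
Proof.
move=> mg; have := mg measurableT _ (measurable_itv `]-oo, c]%R).
by rewrite setTI; congr measurable; apply/seteqP; split=> t /=; rewrite in_itv.
Qed.

Lemma measurable_set_forall {I : finType} {F : I -> set T} :
  (forall i, measurable (F i)) -> measurable [set t | forall i, F i t].
Proof.
move=> mF; have -> : [set t | forall i, F i t] = \bigcap_(i in [set: I]) F i.
  by apply/seteqP; split=> t /= Ft i //; apply: Ft.
by apply: fin_bigcap_measurable => //; exact: finite_finset.
Qed.
End measurable_sets.

Definition cube {R : realType} {n : nat} (z : R) : set ('I_n -> R) :=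
  [set h | forall i, `|h i| <= z].

Lemma measurable_preimage_cube {d : measure_display} {T : measurableType d}
    {R : realType} {n : nat} (e : T -> 'I_n -> R) (z : R) :
  (forall i, measurable_fun setT (fun t => e t i)) ->
  measurable (e @^-1` cube z).
Proof.
move=> me; apply: (measurable_set_forall (F := fun i t => `|e t i| <= z)) => i.
exact/measurable_set_ler/measurableT_comp/me.
Qed.

Lemma cube_vcons {R : realType} {n : nat} (z x : R) (h : 'I_n -> R) :
  cube z (vcons x h) <-> `|x| <= z /\ cube z h.
Proof.
split=> [xh_z|[x_z h_z] i]; last first.
  rewrite /vcons; case: (unliftP ord0 i) => [j _|_].
  - exact: h_z.
  - exact: x_z.
split; first by have := xh_z ord0; rewrite /vcons unlift_none.
by move=> j; have := xh_z (lift ord0 j); rewrite /vcons liftK.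
Qed.

Definition iint_representable (R : realType) (n : nat) : Prop :=
  exists (d : measure_display) (T : measurableType d)
    (mu : {sigma_finite_measure set T -> \bar R}) (e : T -> 'I_n -> R),
  [/\ forall i, measurable_fun setT (fun t => e t i),
      forall z : R, (mu (e @^-1` cube z) < +oo)%E &
      forall f : ('I_n -> R) -> \bar R, (forall h, 0 <= f h)%E ->
        measurable_fun [set: T] (fun t => f (e t)) ->
        iint f = (\int[mu]_(t in setT) f (e t))%E].

Lemma iint_representable0 (R : realType) : iint_representable R 0.
Proof.
exists default_measure_display, unit.
exists (\d_ tt : {sigma_finite_measure set unit -> \bar R}), (fun _ _ => 0).
split=> // [z|f f_ge0 mf]; first by rewrite /= /dirac indicE ltry.
by rewrite integral_dirac// diracE in_setT mul1e.
Qed.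

Lemma iint_representableS (R : realType) (n : nat) :
  iint_representable R n -> iint_representable R n.+1.
Proof.
move=> [d [T [mu [e [me cube_lty iintE]]]]].
exists _, _, (sigma_finite_product (@lebesgue_measure R) mu).
exists (fun t => vcons t.1 (e t.2)); split.
- move=> i; rewrite /vcons; case: (unlift ord0 i) => [j|].
    exact: measurableT_comp (me j) measurable_snd.
  exact: measurable_fst.
- move=> z.
  have -> : (fun t => vcons t.1 (e t.2)) @^-1` cube z =
      `[-z, z] `*` (e @^-1` cube z).
    by apply/seteqP; split=> -[x t] /=; rewrite cube_vcons in_itv /= ler_norml.
  rewrite /= /sigma_finite_product product_measure1E; last 2 first.
  + exact: measurable_itv.
  + exact: measurable_preimage_cube.
  rewrite lte_mul_pinfty//; have /= -> := lebesgue_measure_itv `[-z, z]%R.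
  by case: ifP => _ //; rewrite -EFinD.
- move=> f f_ge0 mf /=.
  rewrite [RHS](fubini_tonelli1 _ mf)//; apply: eq_integral => x _.
  exact/iintE/(measurable_fun_pair2 x mf).
Qed.

Lemma iint_representable_all (R : realType) (n : nat) : iint_representable R n.
Proof.
elim: n => [|n IHn]; first exact: iint_representable0.
exact: iint_representableS.
Qed.

Lemma lvolume_pushforward {d : measure_display} {T : measurableType d}
    {R : realType} {n : nat} {mu : {measure set T -> \bar R}}
    {e : T -> 'I_n -> R}
    (iintE : forall f : ('I_n -> R) -> \bar R, (forall h, 0 <= f h)%E ->
        measurable_fun [set: T] (fun t => f (e t)) ->
        iint f = (\int[mu]_(t in setT) f (e t))%E)
    {X : set ('I_n -> R)} :
  measurable (e @^-1` X) -> lvolume X = mu (e @^-1` X).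
Proof.
move=> mX; rewrite /lvolume iintE; last 2 first.
- by move=> h; rewrite lee_fin.
- by apply/measurable_EFinP; exact: measurable_indic.
by rewrite (integral_indic _ _ mX)// setIT.
Qed.

Section nested_family.
Context {d : measure_display} {T : measurableType d} {R : realType}
  (mu : {measure set T -> \bar R}) {I : finType}.
Variables (E : {set I} -> set T) (C : I -> set T).
Hypotheses (mE : forall S, measurable (E S)) (mC : forall i, measurable (C i))
  (E_fin : forall S, mu (E S) \is a fin_num)
  (E_antitone : forall S U : {set I}, S \subset U -> E U `<=` E S)
  (E_setU1 : forall (S : {set I}) v, v \notin S -> E (v |: S) = E S `&` C v).

Let fin_num_measure_sub X (S : {set I}) :
  measurable X -> X `<=` E S -> mu X \is a fin_num.
Proof.
move=> mX XE; have := E_fin S; rewrite !ge0_fin_numE//; apply: le_lt_trans.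
by apply: le_measure; rewrite ?inE.
Qed.

Lemma fine_measure_antitone (S U : {set I}) :
  S \subset U -> fine (mu (E U)) <= fine (mu (E S)).
Proof.
move=> SU; apply: fine_le; rewrite ?E_fin//.
by apply: le_measure; rewrite ?inE//; exact: E_antitone.
Qed.

Lemma fine_measure_setU1 (S : {set I}) v : v \notin S ->
  fine (mu (E (v |: S))) - fine (mu (E S)) = - fine (mu (E S `\` C v)).
Proof.
move=> vS; rewrite E_setU1// (measureDI _ (mE S) (mC v)) fineD.
- by rewrite opprD addrCA subrr addr0.
- exact: fin_num_measure_sub (measurableD (mE S) (mC v)) (@subDsetl _ _ _).
- exact: fin_num_measure_sub (measurableI _ _ (mE S) (mC v)) (@subIsetl _ _ _).
Qed.

Lemma fine_measure_supermodular (S U : {set I}) v : S \subset U -> v \notin U ->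
  fine (mu (E (v |: S))) - fine (mu (E S))
    <= fine (mu (E (v |: U))) - fine (mu (E U)).
Proof.
move=> SU vU; have vS : v \notin S by apply: contra vU; apply: fintype.subsetP.
rewrite !fine_measure_setU1// lerN2; apply: fine_le.
- exact: fin_num_measure_sub (measurableD (mE U) (mC v)) (@subDsetl _ _ _).
- exact: fin_num_measure_sub (measurableD (mE S) (mC v)) (@subDsetl _ _ _).
apply: le_measure; rewrite ?inE; try exact: measurableD.
by apply: setSD; exact: E_antitone.
Qed.
End nested_family.

Section mdp_polytope.
Context {R : realType} {n : nat} {A : 'I_n -> finType}
  (P : forall i, A i -> 'I_n -> R) (lam zeta : R).
Hypothesis lam_ge0 : 0 <= lam.

Definition action_constraints (i : 'I_n) (c : R) : set ('I_n -> R) :=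
  [set h | forall a : A i, h i - \sum_(j < n) P i a j * h j <= c].

Lemma bS_antitone (S U : {set 'I_n}) i :
  S \subset U -> bS lam U i <= bS lam S i.
Proof.
move=> SU; rewrite /bS; case: ifP => iU; case: ifP => iS //.
- by rewrite gerBl.
- by rewrite (fintype.subsetP SU _ iS) in iU.
Qed.

Lemma mdp_polytope_antitone (S U : {set 'I_n}) : S \subset U ->
  mdp_polytope P lam zeta U `<=` mdp_polytope P lam zeta S.
Proof.
move=> SU h [hU h_zeta]; split=> // i a.
exact: le_trans (hU i a) (bS_antitone _ _ i SU).
Qed.

Lemma mdp_polytope_setU1 (S : {set 'I_n}) v : v \notin S ->
  mdp_polytope P lam zeta (v |: S) =
    mdp_polytope P lam zeta S `&` action_constraints v (1 - lam).
Proof.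
move=> vS; apply/seteqP; split=> h.
  move=> hvS; split.
    exact: mdp_polytope_antitone (finset.subsetUr _ _) _ hvS.
  by move=> a; have [/(_ v a)] := hvS; rewrite /bS setU11.
move=> [[hS h_zeta] hv]; split=> // i.
have [->|iv] := eqVneq i v => a; rewrite /bS in_setU1 ?eqxx ?(negbTE iv) /=.
- exact: hv.
- exact: hS.
Qed.

Lemma mdp_polytope_sub_cube (S : {set 'I_n}) :
  mdp_polytope P lam zeta S `<=` cube zeta.
Proof. by move=> h []. Qed.

Variables (d : measure_display) (T : measurableType d) (e : T -> 'I_n -> R).
Hypothesis me : forall i, measurable_fun setT (fun t => e t i).

Lemma measurable_preimage_action_constraints i c :
  measurable (e @^-1` action_constraints i c).
Proof.
apply: (measurable_set_forall
  (F := fun a t => e t i - \sum_(j < n) P i a j * e t j <= c)) => a.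
apply/measurable_set_ler/measurable_funB => //.
by apply: measurable_sum => j; apply: measurable_funM.
Qed.

Lemma measurable_preimage_mdp_polytope (S : {set 'I_n}) :
  measurable (e @^-1` mdp_polytope P lam zeta S).
Proof.
apply: measurableI; last exact: measurable_preimage_cube.
apply: (measurable_set_forall (F := fun i t =>
  action_constraints i (bS lam S i) (e t))) => i.
exact: measurable_preimage_action_constraints.
Qed.
End mdp_polytope.

Theorem proposition3 (R : realType) (n : nat) (A : 'I_n -> finType)
  (P : forall i : 'I_n, A i -> 'I_n -> R)
  (A_nonempty : forall i : 'I_n, (0 < #|A i|)%N)
  (P_ge0 : forall (i : 'I_n) (a : A i) (j : 'I_n), 0 <= P i a j)
  (P_sum1 : forall (i : 'I_n) (a : A i), \sum_(j < n) P i a j = 1)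
  (lam zeta : R) (lam_ge0 : 0 <= lam) (zeta_gt0 : 0 < zeta) :
  (forall S T : {set 'I_n}, S \subset T ->
     r_lam P lam zeta T <= r_lam P lam zeta S) /\
  (forall (S T : {set 'I_n}) (v : 'I_n), S \subset T -> v \notin T ->
     r_lam P lam zeta (v |: S) - r_lam P lam zeta S
       <= r_lam P lam zeta (v |: T) - r_lam P lam zeta T).
Proof.
have [d [T [mu [e [me cube_lty iintE]]]]] := iint_representable_all R n.
pose E S := e @^-1` mdp_polytope P lam zeta S.
pose C v := e @^-1` action_constraints P v (1 - lam).
have mE S : measurable (E S) by exact: measurable_preimage_mdp_polytope.
have mC v : measurable (C v) by exact: measurable_preimage_action_constraints.
have E_fin S : mu (E S) \is a fin_num.
  rewrite ge0_fin_numE// (le_lt_trans _ (cube_lty zeta))//.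
  apply: le_measure; rewrite ?inE.
  - exact: mE.
  - exact: measurable_preimage_cube.
  - by apply: preimage_subset; exact: mdp_polytope_sub_cube.
have E_antitone (S U : {set 'I_n}) : S \subset U -> E U `<=` E S.
  by move=> SU; apply: preimage_subset; exact: mdp_polytope_antitone.
have E_setU1 (S : {set 'I_n}) v : v \notin S -> E (v |: S) = E S `&` C v.
  by move=> vS; rewrite /E mdp_polytope_setU1// preimage_setI.
have rE S : r_lam P lam zeta S = fine (mu (E S)).
  by rewrite /r_lam (lvolume_pushforward iintE (mE S)).
split=> [S U SU|S U v SU vU]; rewrite !rE.
- exact: fine_measure_antitone.
- exact: fine_measure_supermodular.
Qed.
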